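(* Under the setting below, for every $k\in\{1,\dots,p-1\}$, $$\mathsf v_n^{2k}=\frac{(-1)^k\,(v_n^{2p}\kappa_n^{2p}+1)}{p\,\kappa_n^{2k}(\kappa_n^2-\kappa_n^{-2})}\sum_{a=0}^{p-1}q^{-k(2a-1)}\beta_{a,n}.$$ Moreover, $\beta_{k,n}=\mathsf u_n^k\alpha_{0,n}\mathsf u_n^{1-k}$, and hence, using the known reconstruction identities below, $$\beta_{k,n}=\mathsf U_n\Big[\big(\mathsf B^{-1}(\mu_{n,+})\mathsf A(\mu_{n,+})\big)^k\,\mathsf A^{-1}(\mu_{n,-})\mathsf B(\mu_{n,-})\,\big(\mathsf B^{-1}(\mu_{n,+})\mathsf A(\mu_{n,+})\big)^{1-k}\Big]\mathsf U_n^{-1}.$$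
   Context: Let $p\ge3$ be odd, $q\in\mathbb C$ with $q^p=1$ and $q^2$ a primitive $p$-th root of unity, $q^{1/2}$ a fixed square root with $(q^{1/2})^2=q$. At site $n$ of a chain of $\mathsf N$ sites, $\mathsf u_n,\mathsf v_n$ are invertible operators on $\mathbb C^p$ (tensored with identity elsewhere) with $\mathsf u_n\mathsf v_n=q\mathsf v_n\mathsf u_n$, $\mathsf u_n^p=u_n^p\,\mathrm{Id}$, $\mathsf v_n^p=v_n^p\,\mathrm{Id}$ for nonzero scalars $u_n,v_n$; operators at different sites commute. Let $\kappa_n\ne0$ with $\kappa_n^4\ne1$ and $v_n^{2p}\kappa_n^{2p}\ne-1$. Define $\beta_{k,n}=(q^{2k-1}\mathsf v_n^2+\kappa_n^2)(q^{2k-1}\mathsf v_n^2\kappa_n^2+1)^{-1}$ for $k\in\mathbb Z$, and $\alpha_{0,n}=(q^{-1}\mathsf v_n^2+\kappa_n^2)(q^{-1}\mathsf v_n^2\kappa_n^2+1)^{-1}\mathsf u_n^{-1}$. For the second part: the Lax matrix is $\mathsf L_n(\lambda)=\kappa_n\begin{pmatrix}\mathsf u_n(q^{-1/2}\mathsf v_n\kappa_n+q^{1/2}\mathsf v_n^{-1}\kappa_n^{-1})&(\lambda_n\mathsf v_n-(\mathsf v_n\lambda_n)^{-1})/i\\(\lambda_n/\mathsf v_n-\mathsf v_n/\lambda_n)/i&\mathsf u_n^{-1}(q^{1/2}\mathsf v_n\kappa_n^{-1}+q^{-1/2}\mathsf v_n^{-1}\kappa_n)\end{pmatrix}$, $\lambda_n=\lambda/\xi_n$,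 and $\mathsf L_{\mathsf N}(\lambda)\cdots\mathsf L_1(\lambda)=\begin{pmatrix}\mathsf A(\lambda)&\mathsf B(\lambda)\\ \mathsf C(\lambda)&\mathsf D(\lambda)\end{pmatrix}$. Set $\mu_{n,\pm}=i\kappa_n^{\pm1}q^{1/2}\xi_n$. $\mathsf U_n$ is an invertible operator with $\mathsf U_n\mathsf L_{\mathsf N}(\lambda)\cdots\mathsf L_1(\lambda)\mathsf U_n^{-1}=\mathsf L_{n-1}(\lambda)\cdots\mathsf L_1(\lambda)\mathsf L_{\mathsf N}(\lambda)\cdots\mathsf L_n(\lambda)$. Assume $\mathsf B(\mu_{n,+})$ and $\mathsf A(\mu_{n,-})$ are invertible. Known identities (Oota): $\mathsf u_n=\mathsf U_n\mathsf B^{-1}(\mu_{n,+})\mathsf A(\mu_{n,+})\mathsf U_n^{-1}$ and $\alpha_{0,n}=\mathsf U_n\mathsf A^{-1}(\mu_{n,-})\mathsf B(\mu_{n,-})\mathsf U_n^{-1}$. *)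

(* Operators are modelled as elements of an abstract
   unital algebra R over algC (the algebraic complex numbers). *)
From HB Require Import structures.
From mathcomp Require Import all_boot all_order all_algebra all_field.
Set Implicit Arguments. Unset Strict Implicit. Unset Printing Implicit Defensive.
Import Order.TTheory GRing.Theory Num.Theory.
Local Open Scope ring_scope.

Definition mx2 {T : Type} (a b c d : T) : 'M[T]_2 :=
  \matrix_(i < 2, j < 2)
    if (i == 0 :> nat) then (if (j == 0 :> nat) then a else b)
    else (if (j == 0 :> nat) then c else d).

Definition i0 : 'I_2 := @ord0 1.
Definition i1 : 'I_2 := @ord_max 1.

Section Chain.
Variable R : unitAlgType algC.

Definition beta (q kap : algC) (v : R) (k : int) : R :=
  (q ^ (2 * k - 1) *: v ^+ 2 + (kap ^+ 2)%:A)
  * (q ^ (2 * k - 1) *: (v ^+ 2) * (kap ^+ 2)%:A + 1)^-1.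

Definition alpha0 (q kap : algC) (u v : R) : R :=
  (q^-1 *: v ^+ 2 + (kap ^+ 2)%:A)
  * (q^-1 *: (v ^+ 2) * (kap ^+ 2)%:A + 1)^-1 * u^-1.

(* Lax matrix L_n(lambda), with lam_n = lambda / xi_n and qh = q^{1/2} *)
Definition Lax (qh kap xi lam : algC) (u v : R) : 'M[R]_2 :=
  let ln := lam / xi in
  mx2 (kap *: (u * ((qh^-1 * kap) *: v + (qh * kap^-1) *: v^-1)))
      (kap *: ('i^-1 *: (ln *: v - (v * ln%:A)^-1)))
      (kap *: ('i^-1 *: (ln *: v^-1 - ln^-1 *: v)))
      (kap *: (u^-1 * ((qh * kap^-1) *: v + (qh^-1 * kap) *: v^-1))).

Definition prodL (L : nat -> 'M[R]_2) (s : seq nat) : 'M[R]_2 :=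
  \prod_(i <- s) L i.

Definition monodromy (L : nat -> 'M[R]_2) (N : nat) : 'M[R]_2 :=
  prodL L (rev (iota 1 N)).

(* cyclically shifted product L_{n-1} ... L_1 L_N ... L_n *)
Definition monodromy_shift (L : nat -> 'M[R]_2) (N n : nat) : 'M[R]_2 :=
  prodL L (rev (iota 1 n.-1) ++ rev (iota n (N - n).+1)).

Definition conjop (U : R) (M : 'M[R]_2) : 'M[R]_2 :=
  map_mx (fun x => U * x * U^-1) M.

End Chain.

From HB Require Import structures.
From mathcomp Require Import all_boot all_order all_algebra all_field.
From mathcomp Require Import ring zify.
Set Implicit Arguments. Unset Strict Implicit. Unset Printing Implicit Defensive.
Import Order.TTheory GRing.Theory Num.Theory.
Local Open Scope ring_scope.

(* Write K = kappa^2, w = v^2 and s_a = q^(2a-1).  The operator beta_a is the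
   Moebius transform (s_a w + K)(s_a K w + 1)^-1 of w.  Since (s_a K w)^p is
   the scalar c = v^(2p) kappa^(2p) and p is odd, (x + 1)^-1 is a finite
   geometric series in -x, so beta_a = K^-1 + sum_j s_a^j D (-K)^j w^j with
   D = (K - K^-1)/(c + 1).  Summing against q^(-k(2a-1)) is a discrete
   Fourier transform over the p-th roots of unity: by orthogonality of the
   characters a |-> s_a^j it isolates the coefficient of w^k, which gives the
   first formula.  For the second, conjugation by u^k is a ring automorphism
   which, by the Weyl relation u v = q v u, scales w by q^(2k) and hence maps
   the Moebius transform defining alpha_0 (times u) to the one defining
   beta_k.  The third formula then follows by transporting the second along
   Oota's reconstruction identities, again because conjugation by U commutes
   with products and integer powers. *)

Section RootsOfUnity.
Variable F : fieldType.

Lemma sum_expr_unity_root (y : F) (p : nat) : y ^+ p = 1 ->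
  \sum_(a < p) y ^+ a = if y == 1 then p%:R else 0.
Proof.
have [-> _ | ny1 yp1] := eqVneq y 1.
  by under eq_bigr do rewrite expr1n; rewrite sumr_const card_ord.
have /esym/eqP := subrX1 y p; rewrite yp1 subrr mulf_eq0 subr_eq0.
by rewrite (negbTE ny1) => /eqP.
Qed.

Lemma prim_root_exprz_eq1 (z : F) (p : nat) (d : int) :
  p.-primitive_root z -> (`|d| < p)%N -> (z ^ d == 1) = (d == 0).
Proof.
move=> prim_z; case: d => m /= ltmp.
  rewrite -exprnP -(prim_order_dvd prim_z) eqz_nat.
  by case: m ltmp => [|m] ltmp; rewrite ?dvdn0 // gtnNdvd.
by rewrite NegzE -invr_expz invr_eq1 -exprnP -(prim_order_dvd prim_z) gtnNdvd.
Qed.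

Variables (q : F) (p : nat).
Hypothesis prim_q2 : p.-primitive_root (q ^+ 2).

Lemma unit_prim_sqrt : q \is a GRing.unit.
Proof.
rewrite unitfE; apply: contraTN (prim_order_gt0 prim_q2) => /eqP q0.
by rewrite -eqn0Ngt -(prim_root_eq0 prim_q2) q0 expr0n.
Qed.

Lemma orthogonality (j k : nat) : (j < p)%N -> (k < p)%N ->
  \sum_(a < p) q ^ (- (k%:Z * (2 * (a : nat)%:Z - 1))) * (q ^ (2 * (a : nat)%:Z - 1)) ^+ j
  = (j == k)%:R * p%:R.
Proof.
move=> ltjp ltkp; set d := j%:Z - k%:Z.
have uq := unit_prim_sqrt.
have term (a : nat) : q ^ (- (k%:Z * (2 * a%:Z - 1))) * (q ^ (2 * a%:Z - 1)) ^+ j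
    = q ^ (- d) * ((q ^+ 2) ^ d) ^+ a.
  rewrite !exprnP !exprz_exp -!exprzDr //; congr (q ^ _); rewrite /d; ring.
rewrite (eq_bigr _ (fun (a : 'I_p) _ => term a)) -mulr_sumr.
rewrite sum_expr_unity_root; last first.
  by rewrite exprnP exprz_exp mulrC -exprz_exp -exprnP (prim_expr_order prim_q2) exp1rz.
have -> : ((q ^+ 2) ^ d == 1) = (j == k).
  by rewrite (prim_root_exprz_eq1 prim_q2) ?subr_eq0 ?eqz_nat // /d; lia.
by case: eqP => [jk|_]; rewrite ?mul0r ?mulr0 // /d jk subrr expr0z !mul1r.
Qed.

Lemma fourier_coefficient (V : lmodType F) (k : nat) (c0 : V) (b : nat -> V) :
  (0 < k < p)%N ->
  \sum_(a < p) q ^ (- (k%:Z * (2 * (a : nat)%:Z - 1)))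
       *: (c0 + \sum_(j < p) (q ^ (2 * (a : nat)%:Z - 1)) ^+ j *: b j)
  = p%:R *: b k.
Proof.
case/andP=> k_gt0 ltkp.
rewrite (eq_bigr _ (fun a _ => scalerDr _ _ _)) big_split /= -scaler_suml.
have -> : \sum_(a < p) q ^ (- (k%:Z * (2 * (a : nat)%:Z - 1))) = 0.
  have := orthogonality (ltn_trans k_gt0 ltkp) ltkp.
  rewrite eq_sym (gtn_eqF k_gt0) mul0r => sum0.
  by rewrite -[RHS]sum0; apply: eq_bigr => a _; rewrite expr0 mulr1.
rewrite scale0r add0r.
under eq_bigr do rewrite scaler_sumr.
rewrite exchange_big /=.
under eq_bigr do (under eq_bigr do rewrite scalerA;
                  rewrite -scaler_suml (orthogonality (ltn_ord _) ltkp)).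
rewrite (bigD1 (Ordinal ltkp)) //= eqxx mul1r big1 ?addr0 // => j.
by rewrite -val_eqE /= => /negPf ->; rewrite mul0r scale0r.
Qed.

End RootsOfUnity.

Section Mobius.
Variables (F : fieldType) (R : unitAlgType F).

Section GeometricInverse.
Variables (x : R) (c : F) (p : nat).
Hypotheses (odd_p : odd p) (xp : x ^+ p = c%:A) (c1_neq0 : c + 1 != 0).

Let S := \sum_(j < p) (- x) ^+ j.

(* Since x^p = c and p is odd, (x + 1) sum_j (-x)^j = x^p + 1 = c + 1. *)
Lemma mul_add1_geometric : (x + 1) * S = (c + 1)%:A.
Proof.
have := subrX1 (- x) p; rewrite exprNn -signr_odd odd_p expr1 xp mulN1r.
by rewrite -!opprD mulNr => /oppr_inj <-; rewrite scalerDl scale1r.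
Qed.

Lemma unit_add1_geometric : x + 1 \is a GRing.unit.
Proof.
have comm_S : GRing.comm (x + 1) S.
  apply: commr_sum => j _; apply/commrX/commrN/commr_sym/commrD.
    exact: commr_refl.
  exact: commr1.
apply/unitrP; exists ((c + 1)^-1 *: S); rewrite -scalerAl -scalerAr -comm_S.
by rewrite mul_add1_geometric scalerA mulVf // scale1r.
Qed.

Lemma inv_add1_geometric : (x + 1)^-1 = (c + 1)^-1 *: S.
Proof.
apply: (mulrI unit_add1_geometric); rewrite divrr ?unit_add1_geometric //.
by rewrite -scalerAr mul_add1_geometric scalerA mulVf // scale1r.
Qed.

End GeometricInverse.

(* The Moebius transform of w with matrix [[s, K], [s K, 1]]; both beta and
   alpha_0 are of this shape. *)
Definition mobius (s K : F) (w : R) : R :=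
  (s *: w + K%:A) * ((s * K) *: w + 1)^-1.

Lemma mobiusZ (s K a : F) (w : R) : mobius s K (a *: w) = mobius (s * a) K w.
Proof. by rewrite /mobius !scalerA mulrAC. Qed.

Lemma mobius_expansion (p : nat) (s K c : F) (w : R) :
  odd p -> K != 0 -> ((s * K) *: w) ^+ p = c%:A -> c + 1 != 0 ->
  mobius s K w
  = K^-1%:A + \sum_(j < p) s ^+ j *: (((K - K^-1) / (c + 1) * (- K) ^+ j) *: w ^+ j).
Proof.
move=> odd_p K_neq0 xp c1_neq0; set x := (s * K) *: w.
have num : s *: w + K%:A = K^-1 *: (x + 1) + (K - K^-1)%:A.
  by rewrite scalerDr scalerA mulrCA mulVf // mulr1 scalerBl addrA addrAC addrK.
rewrite /mobius -/x num mulrDl -scalerAl divrr ?(unit_add1_geometric odd_p xp) //.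
rewrite (inv_add1_geometric odd_p xp) // mulr_algl scalerA scaler_sumr.
congr (_ + _); apply: eq_bigr => j _.
by rewrite -scaleNr exprZn !scalerA -mulrN exprMn; congr (_ *: _); ring.
Qed.

End Mobius.

Definition inner (R : unitRingType) (g x : R) : R := g * x * g^-1.

Section InnerAutomorphism.
Variables (R : unitRingType) (g : R).
Hypothesis ug : g \is a GRing.unit.

Lemma inner1 : inner g 1 = 1.
Proof. by rewrite /inner mulr1 divrr. Qed.

Lemma innerM (x y : R) : inner g (x * y) = inner g x * inner g y.
Proof. by rewrite /inner !mulrA divrK. Qed.

Lemma innerK (x : R) : inner g^-1 (inner g x) = x.
Proof. by rewrite /inner invrK !mulrA mulVr // mul1r divrK. Qed.

Lemma innerD (x y : R) : inner g (x + y) = inner g x + inner g y.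
Proof. by rewrite /inner mulrDr mulrDl. Qed.

Lemma inner_comp (h x : R) : h \is a GRing.unit ->
  inner (g * h) x = inner g (inner h x).
Proof. by move=> uh; rewrite /inner invrM // !mulrA. Qed.

Lemma innerV (x : R) : inner g x^-1 = (inner g x)^-1.
Proof.
have [ux | nux] := boolP (x \is a GRing.unit).
  by rewrite /inner !invrM ?unitrV ?unitrMl ?unitrMr // invrK mulrA.
have nuxg : inner g x \isn't a GRing.unit.
  apply: contra nux => uxg; rewrite -[x]innerK {1}/inner invrK.
  by rewrite unitrMr // unitrMl ?unitrV.
by rewrite (invr_out nux) (invr_out nuxg).
Qed.

Lemma innerXz (x : R) (k : int) : inner g (x ^ k) = inner g x ^ k.
Proof.
have innerXn (n : nat) : inner g (x ^+ n) = inner g x ^+ n.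
  by elim: n => [|n IHn]; rewrite ?expr0 ?exprS ?innerM ?IHn // /inner mulr1 divrr.
by case: k => n; rewrite ?NegzE -?invr_expz ?innerV -exprnP innerXn.
Qed.

End InnerAutomorphism.

Section InnerAlgebra.
Variables (F : fieldType) (R : unitAlgType F).

Lemma innerZ (g x : R) (a : F) : inner g (a *: x) = a *: inner g x.
Proof. by rewrite /inner -scalerAr -scalerAl. Qed.

Lemma inner_mobius (g w : R) (s K : F) : g \is a GRing.unit ->
  inner g (mobius s K w) = mobius s K (inner g w).
Proof.
by move=> ug; rewrite /mobius innerM // innerV // !innerD !innerZ inner1.
Qed.

Lemma inner_eigen_exprz (u x : R) (c : F) (k : int) :
  u \is a GRing.unit -> c != 0 -> inner u x = c *: x -> inner (u ^ k) x = c ^ k *: x.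
Proof.
move=> uu c_neq0 eig_u.
have eig_exprn (g : R) (a : F) (n : nat) : g \is a GRing.unit ->
    inner g x = a *: x -> inner (g ^+ n) x = a ^+ n *: x.
  move=> ug eig_g; elim: n => [|n IHn].
    by rewrite !expr0 scale1r /inner mul1r invr1 mulr1.
  by rewrite exprS inner_comp ?unitrX // IHn innerZ eig_g scalerA -exprSr.
have eig_inv : inner u^-1 x = c^-1 *: x.
  have := congr1 (inner u^-1) eig_u; rewrite innerK // innerZ => xE.
  by rewrite [in RHS]xE scalerA mulVf // scale1r.
case: k => n; first exact: eig_exprn.
by rewrite NegzE -!exprz_inv -!exprnP (eig_exprn _ c^-1) ?unitrV.
Qed.

End InnerAlgebra.

Section ChainSite.
Variable R : unitAlgType algC.

Lemma beta_mobius (q kap : algC) (v : R) (k : int) :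
  beta q kap v k = mobius (q ^ (2 * k - 1)) (kap ^+ 2) (v ^+ 2).
Proof. by rewrite /beta /mobius mulr_algr scalerA [kap ^+ 2 * _]mulrC. Qed.

Lemma alpha0_mobius (q kap : algC) (u v : R) :
  alpha0 q kap u v = mobius q^-1 (kap ^+ 2) (v ^+ 2) * u^-1.
Proof. by rewrite /alpha0 /mobius mulr_algr scalerA [kap ^+ 2 * _]mulrC. Qed.

Lemma vsq_power_beta_sum (p k : nat) (q kap vs : algC) (v : R) :
  odd p -> q ^+ p = 1 -> p.-primitive_root (q ^+ 2) -> (0 < k < p)%N ->
  v ^+ p = (vs ^+ p)%:A -> kap != 0 -> kap ^+ 4 != 1 ->
  vs ^+ (2 * p) * kap ^+ (2 * p) != -1 ->
  v ^+ (2 * k) =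
    ((-1) ^+ k * (vs ^+ (2 * p) * kap ^+ (2 * p) + 1)
     / (p%:R * kap ^+ (2 * k) * (kap ^+ 2 - (kap ^+ 2)^-1)))
    *: \sum_(a < p) (q ^ (- (k%:Z * (2 * (a : nat)%:Z - 1))))
                       *: beta q kap v (a : nat)%:Z.
Proof.
move=> odd_p qp1 prim_q2 k_range vp kap_neq0 kap4_neq1 c_neqN1.
set K := kap ^+ 2; set c := vs ^+ (2 * p) * kap ^+ (2 * p).
set D := (K - K^-1) / (c + 1).
have c1_neq0 : c + 1 != 0 by rewrite addr_eq0.
have K_neq0 : K != 0 by rewrite expf_neq0.
have site_power (a : nat) : ((q ^ (2 * a%:Z - 1) * K) *: v ^+ 2) ^+ p = c%:A.
  have unit_power : (q ^ (2 * a%:Z - 1)) ^+ p = 1.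
    by rewrite exprnP exprz_exp mulrC -exprz_exp -exprnP qp1 exp1rz.
  rewrite exprZn exprMn unit_power mul1r [v ^+ 2 ^+ p]exprAC vp exprZn expr1n scalerA.
  by rewrite /c /K -!exprM mulrC mulnC.
have beta_expansion (a : 'I_p) : beta q kap v (a : nat)%:Z =
    K^-1%:A + \sum_(j < p) (q ^ (2 * (a : nat)%:Z - 1)) ^+ j
                           *: ((D * (- K) ^+ j) *: (v ^+ 2) ^+ j).
  by rewrite beta_mobius (mobius_expansion odd_p K_neq0 (site_power a) c1_neq0).
rewrite (eq_bigr _ (fun a _ => congr1 _ (beta_expansion a))).
rewrite (fourier_coefficient prim_q2 _ (fun j => (D * (- K) ^+ j) *: (v ^+ 2) ^+ j)) //.
rewrite /= !scalerA [LHS]exprM -[LHS]scale1r; congr (_ *: _).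
have p_neq0 : (p%:R : algC) != 0 by rewrite pnatr_eq0 -lt0n (prim_order_gt0 prim_q2).
have KK_neq1 : K * K - 1 != 0 by rewrite subr_eq0 /K -exprD.
have sign2 : (-1) ^+ k * (-1) ^+ k = 1 :> algC by rewrite -expr2 sqrr_sign.
rewrite /D [(- K) ^+ k]exprNn exprM -/K -[LHS]sign2; field.
by rewrite c1_neq0 K_neq0 KK_neq1 p_neq0 expf_neq0.
Qed.

Lemma beta_weyl (q kap : algC) (u v : R) (k : int) :
  q != 0 -> u \is a GRing.unit -> u * v = q *: (v * u) ->
  beta q kap v k = u ^ k * alpha0 q kap u v * u ^ (1 - k).
Proof.
move=> q_neq0 uu uv.
have uq : q \is a GRing.unit by rewrite unitfE.
have eig_v : inner u v = q *: v by rewrite /inner uv -scalerAl mulrK.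
have eig_w : inner u (v ^+ 2) = q ^+ 2 *: v ^+ 2.
  by rewrite !expr2 innerM // eig_v -scalerAl -scalerAr scalerA.
have inv_shift : u^-1 * u ^ (1 - k) = (u ^ k)^-1.
  by rewrite (invr_expz u 1) -exprzDr // invr_expz addrA addNr add0r.
have exponent : q^-1 * (q ^+ 2) ^ k = q ^ (2 * k - 1).
  by rewrite (invr_expz q 1) exprnP exprz_exp -exprzDr // addrC.
rewrite alpha0_mobius -mulrA -[_ * u ^ (1 - k)]mulrA inv_shift mulrA -/(inner _ _).
rewrite inner_mobius ?unitrXz // (inner_eigen_exprz _ uu _ eig_w) ?expf_neq0 //.
by rewrite mobiusZ exponent beta_mobius.
Qed.

End ChainSite.

Theorem mainTheorem4
  (R : unitAlgType algC) (p N n : nat) (q qh : algC)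
  (uu vv : nat -> R) (us vs kap xi : nat -> algC) (U : R)
  (* p odd, p >= 3; q^p = 1, q^2 primitive p-th root of unity, qh^2 = q *)
  (Hp3 : (3 <= p)%N) (Hpodd : odd p)
  (Hqp : q ^+ p = 1) (Hq2 : p.-primitive_root (q ^+ 2)) (Hqh : qh ^+ 2 = q)
  (* chain of N sites, n is one of them *)
  (Hn : (1 <= n <= N)%N)
  (* site operators: Weyl relations, p-th powers scalar, invertible *)
  (Huu : forall m, (1 <= m <= N)%N -> uu m \is a GRing.unit)
  (Hvv : forall m, (1 <= m <= N)%N -> vv m \is a GRing.unit)
  (Hus : forall m, (1 <= m <= N)%N -> us m != 0)
  (Hvs : forall m, (1 <= m <= N)%N -> vs m != 0)
  (Huv : forall m, (1 <= m <= N)%N -> uu m * vv m = q *: (vv m * uu m))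
  (Hup : forall m, (1 <= m <= N)%N -> uu m ^+ p = (us m ^+ p)%:A)
  (Hvp : forall m, (1 <= m <= N)%N -> vv m ^+ p = (vs m ^+ p)%:A)
  (* operators at different sites commute *)
  (Hcuu : forall m m', (1 <= m <= N)%N -> (1 <= m' <= N)%N -> m != m' ->
            uu m * uu m' = uu m' * uu m)
  (Hcvv : forall m m', (1 <= m <= N)%N -> (1 <= m' <= N)%N -> m != m' ->
            vv m * vv m' = vv m' * vv m)
  (Hcuv : forall m m', (1 <= m <= N)%N -> (1 <= m' <= N)%N -> m != m' ->
            uu m * vv m' = vv m' * uu m)
  (* parameters *)
  (Hk0 : forall m, (1 <= m <= N)%N -> kap m != 0)
  (Hk4 : forall m, (1 <= m <= N)%N -> kap m ^+ 4 != 1)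
  (Hvk : forall m, (1 <= m <= N)%N ->
           vs m ^+ (2 * p) * kap m ^+ (2 * p) != -1)
  (Hxi : forall m, (1 <= m <= N)%N -> xi m != 0)
  (* U_n conjugates the monodromy to the cyclically shifted product *)
  (HU : U \is a GRing.unit)
  (HUL : forall lam : algC,
     conjop U (monodromy (fun m => Lax qh (kap m) (xi m) lam (uu m) (vv m)) N)
     = monodromy_shift (fun m => Lax qh (kap m) (xi m) lam (uu m) (vv m)) N n) :
  let L lam := monodromy (fun m => Lax qh (kap m) (xi m) lam (uu m) (vv m)) N in
  let A lam := L lam i0 i0 in
  let B lam := L lam i0 i1 in
  let mup := 'i * kap n * qh * xi n in
  let mum := 'i * (kap n)^-1 * qh * xi n in
  (* invertibility assumptions and Oota's reconstruction identities *)
  B mup \is a GRing.unit ->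
  A mum \is a GRing.unit ->
  uu n = U * ((B mup)^-1 * A mup) * U^-1 ->
  alpha0 q (kap n) (uu n) (vv n) = U * ((A mum)^-1 * B mum) * U^-1 ->
  (forall k : nat, (1 <= k <= p - 1)%N ->
     vv n ^+ (2 * k) =
       ((-1) ^+ k * (vs n ^+ (2 * p) * kap n ^+ (2 * p) + 1)
        / (p%:R * kap n ^+ (2 * k) * (kap n ^+ 2 - (kap n ^+ 2)^-1)))
       *: \sum_(a < p) (q ^ (- (k%:Z * (2 * (a : nat)%:Z - 1))))
                          *: beta q (kap n) (vv n) (a : nat)%:Z)
  /\ (forall k : int,
        beta q (kap n) (vv n) k
        = uu n ^ k * alpha0 q (kap n) (uu n) (vv n) * uu n ^ (1 - k))
  /\ (forall k : int,
        beta q (kap n) (vv n) k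
        = U * (((B mup)^-1 * A mup) ^ k * ((A mum)^-1 * B mum)
               * ((B mup)^-1 * A mup) ^ (1 - k)) * U^-1).
Proof.
move=> L A B mup mum unit_B unit_A u_rec alpha_rec.
have q_neq0 : q != 0 by rewrite -unitfE (unit_prim_sqrt Hq2).
have beta_n (k : int) :
    beta q (kap n) (vv n) k = uu n ^ k * alpha0 q (kap n) (uu n) (vv n) * uu n ^ (1 - k).
  exact: beta_weyl q_neq0 (Huu n Hn) (Huv n Hn).
split; [|split=> // k].
  move=> k k_range; apply: vsq_power_beta_sum => //;
    [lia | exact: Hvp | exact: Hk0 | exact: Hk4 | exact: Hvk].
rewrite beta_n alpha_rec u_rec.
by rewrite -![U * _ * U^-1]/(inner U _) -!innerXz // -!innerM.
Qed.
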